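(* Let $d\ge 1$ and $N\ge 1$, and let $(X_1,Y_1),\dots,(X_N,Y_N),(X_{test},Y_{test})$ be i.i.d. random variables with values in $\mathbb{R}^d\times\mathbb{R}$ and common (unknown) distribution $P_{XY}$. Let $f:\mathbb{R}^d\to\mathbb{R}$ be a fixed point-prediction model (intended as an approximation of $\mathrm{E}(Y\mid X)$), and set $A_n=(f(X_n)-Y_n)^2$ for $n=1,\dots,N$ and $A_{test}=(f(X_{test})-Y_{test})^2$. Let $\{\phi_x:\mathbb{R}_+\to\mathcal{B}_x\}_{x\in\mathbb{R}^d}$ be a family of differentiable functions such that (i) $\phi_x'(a)>0$ for all $x\in\mathbb{R}^d$ and all $a\in\mathbb{R}_+$, and (ii) $\mathcal{B}_x=\phi_x(\mathbb{R}_+)$ is the same set for all $x\in\mathbb{R}^d$. Let $B_n=\phi_{X_n}(A_n)$, $n=1,\dots,N$, and assume $B_n\neq B_{n'}$ whenever $n\neq n'$. Then there is a permutation $(m_1,\dots,m_N)$ of $\{1,\dots,N\}$ with $B_{m_1}<\dots<B_{m_N}$, and for every $\alpha\in[\frac{1}{N+1},1)$, setting $k=\lceil (N+1)(1-\alpha)\rceil$ (so $1\le k\le N$), the interval $$C=[f(X_{test})-\Delta,\ f(X_{test})+\Delta],\qquad \Delta=\sqrt{\phi_{X_{test}}^{-1}\big(B_{m_k}\big)},$$ where $\phi_{X_{test}}^{-1}:\mathcal{B}_{X_{test}}\to\mathbb{R}_+$ is the inverse of $\phi_{X_{test}}$, satisfies $$\mathrm{Prob}\big(Y_{test}\in C\big)\ge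 1-\alpha .$$
   Context: $\mathbb{R}_+=[0,\infty)$ denotes the set of possible values of the base conformity score $a(f(X),Y)=(f(X)-Y)^2$. The functions $\phi_x$ are attribute-dependent transformations of this conformity score; $B_n=\phi_{X_n}(A_n)$ are the transformed conformity scores of the calibration samples, and $B_{m_k}$ is the $k$-th smallest of them. ''Marginally valid with confidence $1-\alpha$'' means $\mathrm{Prob}(Y_{test}\in C)\ge 1-\alpha$, the probability being over all $N+1$ samples jointly. *)

From HB Require Import structures.
From mathcomp Require Import all_boot all_order all_algebra.
From mathcomp Require Import all_classical all_reals all_analysis.
Set Implicit Arguments. Unset Strict Implicit. Unset Printing Implicit Defensive.
Import Order.TTheory GRing.Theory Num.Theory.
Import numFieldNormedType.Exports.
Local Open Scope classical_set_scope.
Local Open Scope ring_scope.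

Definition iid_family {dT dS : measure_display} {R : realType}
  {T : measurableType dT} {S : measurableType dS} (P : probability T R)
  {I : finType} (Z : I -> T -> S) : Prop :=
  [/\ (forall i, measurable_fun setT (Z i)),
      (* mutual independence: product rule for every choice of events
         (subfamilies are obtained by taking E i = setT) *)
      (forall E : I -> set S, (forall i, measurable (E i)) ->
         P (\bigcap_(i in [set: I]) (Z i @^-1` E i)) =
         (\prod_(i : I) P (Z i @^-1` E i))%E) &
      (forall i j (B : set S), measurable B ->
         P (Z i @^-1` B) = P (Z j @^-1` B))].

(* g has a (one-sided at the boundary 0) derivative on R_+ = [0,oo) which is
   strictly positive everywhere on R_+: the derivative of the restriction of
   g to R_+. *)
Definition pos_deriv_on_Rplus {R : realType} (g : R -> R) : Prop :=
  forall a : R, 0 <= a -> exists l : R, 0 < l /\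
    (fun h : R => h^-1 * (g (a + h) - g a)) @
       within [set h : R | 0 <= a + h] (0 : R)^' --> l.

(* Inverse of g restricted to R_+: the (chosen) a >= 0 with g a = b. When g is
   injective on R_+ and b lies in g(R_+) this is the unique such a. *)
Definition inv_Rplus {R : realType} (g : R -> R) (b : R) : R :=
  xget 0 [set a : R | 0 <= a /\ g a = b].

(* The score of a sample (x, y) is phi_x((f x - y)^2).  Every phi_x is strictly
   increasing on R_+ and all of them have the same range, so Y_test lies in C exactly
   when the test score is at most the k-th smallest calibration score, i.e. when fewer
   than k calibration scores lie strictly below it.  The N+1 scores are i.i.d., hence
   exchangeable: permuting them does not change their joint law, since both laws agree
   on measurable rectangles, which generate the product sigma-algebra.  Hence all N+1
   samples have the same probability of having fewer than k scores strictly below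
   them; as pointwise at least k samples have this property, that probability is at
   least k/(N+1) >= 1 - alpha. *)

From HB Require Import structures.
From mathcomp Require Import all_boot all_order all_algebra.
From mathcomp Require Import all_classical all_reals all_analysis.
From mathcomp Require Import fingroup perm measurable_realfun.
From mathcomp Require Import zify lra.
Set Implicit Arguments. Unset Strict Implicit. Unset Printing Implicit Defensive.
Import Order.TTheory GRing.Theory Num.Theory.
Import numFieldNormedType.Exports.
Local Open Scope classical_set_scope.
Local Open Scope ring_scope.

Lemma halfmin_between (R : realFieldType) (p q : R) : 0 < p -> 0 < q ->
  let r := Num.min p q / 2 in [/\ 0 < r, r < p & r < q].
Proof.
move=> p0 q0 r; have m0 : 0 < Num.min p q by rewrite lt_min p0.
have [mp mq] : Num.min p q <= p /\ Num.min p q <= q by rewrite !ge_min !lexx orbT.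
by split; rewrite /r; lra.
Qed.

Section PositiveDerivative.
Variables (R : realType) (g : R -> R).
Hypothesis g'_gt0 : pos_deriv_on_Rplus g.

Lemma pos_deriv_on_Rplus_locally_lt (a : R) : 0 <= a ->
  exists2 e : R, 0 < e & forall y, 0 <= y -> `|y - a| < e ->
    (y < a -> g y < g a) /\ (a < y -> g a < g y).
Proof.
move=> a0; have [l [l0 gl]] := g'_gt0 a0.
have /(_ (within_filter _ _)) := @cvgr_gt _ _ _ _ _ _ gl 0 l0.
rewrite /nbhs /= /dnbhs /within /= => /nbhs_ballP[e e0 quot_gt0].
exists e => // y y0 ya.
have quot : y != a -> 0 < (y - a)^-1 * (g y - g a).
  move=> ay; have := quot_gt0 (y - a); rewrite subrKC; apply => //.
    by rewrite /ball /= sub0r normrN.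
  by rewrite subr_eq0.
split => [lt_ya|lt_ay].
- have := quot (negbT (lt_eqF lt_ya)).
  by rewrite nmulr_rgt0 ?invr_lt0 ?subr_lt0.
- have := quot (negbT (gt_eqF lt_ay)).
  by rewrite pmulr_rgt0 ?invr_gt0 ?subr_gt0.
Qed.

Lemma pos_deriv_on_Rplus_lt : {in `[0, +oo[ &, {homo g : x y / x < y}}.
Proof.
(* Real induction: [s] bounds the points up to which [g] stays above [g a]; the
   local behaviour of [g] at [s] shows that [s] qualifies itself and that [s = b]. *)
move=> a b; rewrite !in_itv /= !andbT => a0 _ ab.
pose S := [set x | a <= x <= b /\ forall y, a < y <= x -> g a < g y].
have Sa : S a by split=> [|y /andP[]]; [rewrite lexx ltW | lra].
have supS : has_sup S by split; [exists a | exists b => x [/andP[]]].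
set s := sup S.
have as_ : a <= s := sup_upper_bound supS Sa.
have sb : s <= b by apply: ge_sup; [exists a | move=> x [/andP[]]].
have [e e0 near_s] := pos_deriv_on_Rplus_locally_lt (le_trans a0 as_).
have below_s y : a < y < s -> g a < g y.
  move=> /andP[ay ys]; have [x [_ Sx] yx] := sup_gt (ex_intro _ a Sa) ys.
  by apply: Sx; rewrite ay ltW.
have upto_s y : a < y <= s -> g a < g y.
  move=> /andP[ay]; rewrite le_eqVlt => /orP[/eqP ys|ys]; last by rewrite below_s ?ay.
  rewrite {y}ys in ay *.
  have sa0 : 0 < s - a by lra.
  have [r0 re rsa] := halfmin_between e0 sa0; set r := _ / 2 in r0 re rsa.
  have := near_s (s - r); rewrite addrAC subrr add0r normrN gtr0_norm //.
  have := below_s (s - r); lra.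
have gas : g a <= g s.
  have [->|ne_as] := eqVneq a s; first exact: lexx.
  by rewrite ltW // upto_s // lexx andbT lt_neqAle ne_as.
have sE : s = b.
  apply/le_anti; rewrite sb leNgt; apply/negP => lt_sb.
  have bs0 : 0 < b - s by lra.
  have [r0 re rbs] := halfmin_between e0 bs0; set r := _ / 2 in r0 re rbs.
  suff /(sup_upper_bound supS) : S (s + r) by rewrite -/s; lra.
  split=> [|y /andP[ay ysr]]; first by apply/andP; split; lra.
  have [ys|sy] := leP y s; first by rewrite upto_s ?ay.
  have := near_s y; rewrite gtr0_norm ?subr_gt0 //; lra.
by apply: upto_s; rewrite sE ab lexx.
Qed.

Lemma pos_deriv_on_Rplus_le : {in `[0, +oo[ &, {mono g : x y / x <= y}}.
Proof. exact: le_mono_in pos_deriv_on_Rplus_lt. Qed.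

Lemma inv_RplusP b : (g @` [set x | 0 <= x]) b ->
  0 <= inv_Rplus g b /\ g (inv_Rplus g b) = b.
Proof. by move=> [a a0 gab]; apply: (@xgetPex _ 0 [set x | 0 <= x /\ g x = b]); exists a. Qed.

Lemma le_inv_Rplus b a : (g @` [set x | 0 <= x]) b -> 0 <= a ->
  (a <= inv_Rplus g b) = (g a <= b).
Proof.
move=> /inv_RplusP[inv0 ginv] a0.
by rewrite -{2}ginv pos_deriv_on_Rplus_le // in_itv /= andbT.
Qed.

End PositiveDerivative.

Section Ranks.
Variables (disp : Order.disp_t) (T : orderType disp).
Local Open Scope set_scope.

Definition rank_lt (I : finType) (v : I -> T) (x : T) : nat := #|[set i | (v i < x)%O]|.

Definition sorting_perm (N : nat) (v : 'I_N -> T) (m : {perm 'I_N}) : Prop :=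
  forall i j : 'I_N, (i < j)%N -> (v (m i) < v (m j))%O.

Lemma rank_lt_comp (I J : finType) (v : I -> T) (h : J -> I) x :
  bijective h -> rank_lt (v \o h) x = rank_lt v x.
Proof.
move=> [g hK gK]; rewrite /rank_lt -(card_imset _ (can_inj hK)); apply: eq_card => i.
rewrite finset.inE; apply/imsetP/idP => [[j + ->]|vi]; first by rewrite finset.inE.
by exists (g i); rewrite ?finset.inE /= gK.
Qed.

Lemma rank_lt_option (I : finType) (v : I -> T) x :
  rank_lt (fun o : option I => if o is Some i then v i else x) x = rank_lt v x.
Proof.
rewrite /rank_lt -[RHS](card_imset _ Some_inj); apply: eq_card => -[i|].
  by rewrite finset.inE (mem_imset _ _ Some_inj) finset.inE.
by rewrite finset.inE ltxx; apply/esym/imsetP => -[].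
Qed.

Lemma le_rank_lt (I : finType) (v : I -> T) x y : (x <= y)%O -> (rank_lt v x <= rank_lt v y)%N.
Proof.
move=> xy; rewrite /rank_lt; apply/subset_leq_card/fintype.subsetP => i; rewrite !finset.inE => vix.
exact: lt_le_trans xy.
Qed.

Lemma lt_rank_lt (I : finType) (v : I -> T) i y :
  (v i < y)%O -> (rank_lt v (v i) < rank_lt v y)%N.
Proof.
move=> viy; rewrite /rank_lt; apply/proper_card/fintype.properP; split.
  by apply/fintype.subsetP => j; rewrite !finset.inE => /lt_trans; apply.
by exists i; rewrite !finset.inE ?ltxx.
Qed.

Lemma rank_lt_card (I : finType) (v : I -> T) i : (rank_lt v (v i) < #|I|)%N.
Proof.
rewrite /rank_lt -cardsT; apply/proper_card/fintype.properP; split; first exact: finset.subsetT.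
by exists i; rewrite !finset.inE ?ltxx.
Qed.

Lemma exists_sorting_perm (N : nat) (v : 'I_N -> T) :
  injective v -> exists m : {perm 'I_N}, sorting_perm v m.
Proof.
move=> v_inj; pose rk i : 'I_N := cast_ord (card_ord N) (Ordinal (rank_lt_card v i)).
have rk_inj : injective rk.
  move=> i j /(congr1 val) /= rk_ij; apply: v_inj.
  by case: (ltgtP (v i) (v j)) => // /lt_rank_lt; rewrite rk_ij ltnn.
exists (perm rk_inj)^-1%g => i j ij; rewrite ltNge; apply: contraTN ij => /(le_rank_lt v).
have rkK x : rank_lt v (v ((perm rk_inj)^-1%g x)) = x.
  by have /(congr1 val) := permKV (perm rk_inj) x; rewrite permE.
by rewrite !rkK -leqNgt.
Qed.

Lemma card_ord_ltn N k : (k <= N)%N -> #|[set i : 'I_N | (i < k)%N]| = k.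
Proof.
move=> kN; have -> : [set i : 'I_N | (i < k)%N] = widen_ord kN @: 'I_k.
  apply/setP => i; rewrite finset.inE; apply/idP/imsetP => [ik|[j _ ->]].
    by exists (Ordinal ik) => //; apply: val_inj.
  exact: (ltn_ord j).
rewrite card_imset ?card_ord // => i j /(congr1 val) ij; exact: val_inj.
Qed.

Lemma le_sorted_rank_lt N (v : 'I_N -> T) (m : {perm 'I_N}) (k : 'I_N) x :
  sorting_perm v m -> (x <= v (m k))%O = (rank_lt v x <= k)%N.
Proof.
move=> sorted_vm.
have le_vm (i j : 'I_N) : (i <= j)%N -> (v (m i) <= v (m j))%O.
  by rewrite leq_eqVlt => /predU1P[/val_inj->|/sorted_vm/ltW].
have card_m_lt j : (j <= N)%N -> #|m @: [set i : 'I_N | (i < j)%N]| = j.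
  by move=> jN; rewrite card_imset ?card_ord_ltn //; exact: perm_inj.
apply/idP/idP => [le_x|].
  have sub : [set n | (v n < x)%O] \subset m @: [set i : 'I_N | (i < k)%N].
    apply/fintype.subsetP => n; rewrite finset.inE => vnx; apply/imsetP.
    exists ((m^-1)%g n); last by rewrite permKV.
    rewrite finset.inE ltnNge; apply: contraTN vnx => /le_vm; rewrite permKV -leNgt.
    exact: le_trans.
  by rewrite -[X in (_ <= X)%N](card_m_lt k (ltnW (ltn_ord k))) subset_leq_card.
rewrite leNgt; apply: contraL => lt_vmk_x; rewrite -ltnNge.
have sub : m @: [set i : 'I_N | (i < k.+1)%N] \subset [set n | (v n < x)%O].
  apply/fintype.subsetP => n /imsetP[i]; rewrite !finset.inE => ik ->.
  exact: le_lt_trans (le_vm _ _ ik) lt_vmk_x.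
by rewrite -[X in (X <= _)%N](card_m_lt k.+1 (ltn_ord k)) subset_leq_card.
Qed.

Lemma card_rank_lt_le_gt (I : finType) (v : I -> T) k :
  (k < #|I|)%N -> (k < #|[set j | (rank_lt v (v j) <= k)%N]|)%N.
Proof.
move=> kI; set J := [set j | _]; rewrite ltnNge; apply/negP => cardJ.
have /card_gt0P[j0 j0J] : (0 < #|~: J|)%N by rewrite cardsCs finset.setCK; lia.
have [j jNJ j_min] := arg_minnP (fun j => rank_lt v (v j)) j0J.
suff jJ : j \in J by have : j \in ~: J := jNJ; rewrite finset.in_setC jJ.
rewrite finset.inE; apply: leq_trans cardJ.
apply/subset_leq_card/fintype.subsetP => i; rewrite finset.inE => vij.
apply: contraT => iNJ; have /j_min : i \in ~: J by rewrite finset.in_setC.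
by rewrite leqNgt lt_rank_lt.
Qed.

End Ranks.

Lemma iid_family_comp {dT dS dS' : measure_display} {R : realType}
    {T : measurableType dT} {S : measurableType dS} {S' : measurableType dS'}
    (P : probability T R) (I : finType) (Z : I -> T -> S) (g : S -> S') :
  measurable_fun setT g -> iid_family P Z -> iid_family P (fun i => g \o Z i).
Proof.
move=> mg [mZ indep ident].
have mgE E : measurable E -> measurable (g @^-1` E) by move=> mE; rewrite -[_ @^-1` _]setTI; exact: mg.
split=> [i|E mE|i j E mE]; first exact: measurableT_comp.
- exact: (indep (fun i => g @^-1` E i) (fun i => mgE _ (mE i))).
- exact: (ident i j _ (mgE _ mE)).
Qed.

Definition rect {dS : measure_display} {S : measurableType dS} (K : nat) (E : 'I_K -> set S) :
  set (K.-tuple S) :=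
  [set v | forall j, E j (tnth v j)].

Definition rects {dS : measure_display} (S : measurableType dS) (K : nat) :
  set (set (K.-tuple S)) :=
  [set rect E | E in [set E | forall j, measurable (E j)]].

Lemma measurable_rect {dS : measure_display} {S : measurableType dS} (K : nat)
    (E : 'I_K -> set S) :
  (forall j, measurable (E j)) -> measurable (rect E).
Proof.
move=> mE; have -> : rect E = \big[setI/setT]_(j <- index_enum 'I_K) ((fun v : K.-tuple S => tnth v j) @^-1` E j).
  rewrite -bigcap_seq; apply/seteqP; split=> [v vE j _|v vE j]; first exact: vE.
  by apply: vE; rewrite /= mem_index_enum.
apply: bigsetI_measurable => j _.
by rewrite -[X in measurable X]setTI; apply: measurable_tnth.
Qed.

Lemma measurable_sub_sigma_rects {dS : measure_display} {S : measurableType dS} (K : nat)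
    (A : set (K.-tuple S)) :
  measurable A -> <<s @rects _ S K >> A.
Proof.
move=> mA; apply: (smallest_sub (@smallest_sigma_algebra _ _ _) _ mA).
move=> B; rewrite -bigcup_seq => -[i _ [C mC <-]].
apply: sub_sigma_algebra; exists (fun j => if j == i then C else setT).
  by move=> j; case: (j == i).
apply/seteqP; split=> [v Hv|v [_ Cv] j]; last by case: eqP => [->|].
by split=> //; have := Hv i; rewrite eqxx.
Qed.

Section Exchangeability.
Context {dT dS : measure_display} {T : measurableType dT} {S : measurableType dS}.
Context {R : realType}.
Variables (P : probability T R) (I : finType) (W : I -> T -> S).
Hypothesis iidW : iid_family P W.

Definition permuted_tuple (s : {perm I}) (w : T) : #|I|.-tuple S :=
  [tuple W (s (enum_val j)) w | j < #|I|].

Lemma measurable_permuted_tuple s : measurable_fun setT (permuted_tuple s).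
Proof.
case: iidW => mW _ _; apply/measurable_fun_tnthP => j.
rewrite /comp /permuted_tuple /=.
by under eq_fun do rewrite tnth_mktuple; exact: mW.
Qed.

Lemma probability_permuted_rect s (E : 'I_#|I| -> set S) : (forall j, measurable (E j)) ->
  P (permuted_tuple s @^-1` rect E) = (\prod_(i : I) P (W i @^-1` E (enum_rank i)))%E.
Proof.
case: iidW => _ indep ident mE.
have -> : permuted_tuple s @^-1` rect E =
    \bigcap_(i in [set: I]) (W i @^-1` E (enum_rank ((s^-1)%g i))).
  apply/seteqP; split=> [w wE i _|w wE j] /=.
    by have := wE (enum_rank ((s^-1)%g i)); rewrite tnth_mktuple enum_rankK permKV.
  by rewrite tnth_mktuple; have := wE (s (enum_val j)) Logic.I; rewrite /= permK enum_valK.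
rewrite indep // (reindex_inj (@perm_inj _ s)) /=.
by apply: eq_bigr => i _; rewrite permK; exact: ident.
Qed.

Lemma permuted_tuple_law s1 s2 (A : set (#|I|.-tuple S)) : measurable A ->
  P (permuted_tuple s1 @^-1` A) = P (permuted_tuple s2 @^-1` A).
Proof.
move=> mA; pose law s : {mfun T >-> #|I|.-tuple S} := HB.pack (permuted_tuple s)
  (isMeasurableFun.Build _ _ _ _ (permuted_tuple s) (measurable_permuted_tuple s)).
have := @g_sigma_algebra_measure_unique _ R _ (@rects _ S #|I|) _ (fun _ => setT) _ _
  (distribution P (law s1)) (distribution P (law s2)).
apply.
- by move=> _ [E mE <-]; exact: measurable_rect.
- by move=> _; exists (fun _ => setT) => //; apply/seteqP; split.
- by rewrite bigcup_const.
- move=> _ _ [E mE <-] [E' mE' <-]; exists (fun j => E j `&` E' j).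
    by move=> j; apply: measurableI.
  by apply/seteqP; split=> [v vEE'|v [vE vE'] j]; [split=> j; case: (vEE' j)|split].
- move=> _ [E mE <-].
  change (P (permuted_tuple s1 @^-1` rect E) = P (permuted_tuple s2 @^-1` rect E)).
  by rewrite !probability_permuted_rect.
- move=> _; change (P (permuted_tuple s1 @^-1` setT) < +oo)%E.
  by rewrite preimage_setT probability_setT ltry.
- exact: measurable_sub_sigma_rects.
Qed.

End Exchangeability.

Lemma sum_indic_card {U : Type} {R : pzRingType} (I : finType) (A : I -> set U) (x : U) :
  \sum_(i : I) (\1_(A i) x : R) = #|[set i | x \in A i]%SET|%:R.
Proof.
rewrite -sumr_const [RHS]big_mkcond /=; apply: eq_bigr => i _.
by rewrite indicE finset.inE; case: (x \in A i).
Qed.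

Lemma measurable_rank_le (R : realType) (K k : nat) (j : 'I_K) :
  measurable [set v : K.-tuple R | (rank_lt (tnth v) (tnth v j) <= k)%N].
Proof.
pose below i := [set v : K.-tuple R | tnth v i < tnth v j].
have mbelow i : measurable (below i).
  rewrite -[below i]setTI -[below i]/((fun v => tnth v i < tnth v j) @^-1` [set true]).
  by apply: measurable_fun_ltr => //; exact: measurable_tnth.
have mrank : measurable_fun setT (fun v => \sum_(i : 'I_K) (\1_(below i) v : R)).
  by apply: measurable_sum => i; exact: measurable_indic.
have rankE v : (rank_lt (tnth v) (tnth v j))%:R = \sum_(i : 'I_K) (\1_(below i) v : R).
  rewrite sum_indic_card; congr _%:R; apply: eq_card => i.
  by rewrite !finset.inE; apply/idP/idP; rewrite in_setE.
have := mrank measurableT _ (measurable_itv `]-oo, k%:R]); rewrite setTI.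
by congr measurable; apply/seteqP; split=> v; rewrite /= -rankE in_itv /= ler_nat.
Qed.

Section ConformalRank.
Context {dT : measure_display} {T : measurableType dT} {R : realType}.
Variables (P : probability T R) (I : finType) (W : I -> T -> R) (k : nat).
Hypothesis iidW : iid_family P W.

Definition rank_event (o : I) : set T := [set w | (rank_lt (W^~ w) (W o w) <= k)%N].

Let tuple_rank_le (o : I) : set (#|I|.-tuple R) :=
  [set v | (rank_lt (tnth v) (tnth v (enum_rank o)) <= k)%N].

Lemma preimage_permuted_rank_le s o :
  permuted_tuple W s @^-1` tuple_rank_le o = rank_event (s o).
Proof.
have rankE w : rank_lt (tnth (permuted_tuple W s w)) (tnth (permuted_tuple W s w) (enum_rank o))
    = rank_lt (W^~ w) (W (s o) w).
  rewrite [X in rank_lt _ X]tnth_mktuple enum_rankK.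
  have -> : tnth (permuted_tuple W s w) = (W^~ w) \o (s \o enum_val).
    by apply/funext => j; rewrite tnth_mktuple.
  by rewrite rank_lt_comp //; exact/(bij_comp (Bijective (permK s) (permKV s)))/enum_val_bij.
by apply/seteqP; split=> w; rewrite /= /tuple_rank_le /= rankE.
Qed.

Lemma measurable_rank_event o : measurable (rank_event o).
Proof.
rewrite -(perm1 o) -preimage_permuted_rank_le -[X in measurable X]setTI.
exact: (measurable_permuted_tuple iidW _ measurableT (measurable_rank_le _ _)).
Qed.

Lemma probability_rank_event o o' : P (rank_event o) = P (rank_event o').
Proof.
rewrite -{1}(perm1 o) -(tpermL o o') -!preimage_permuted_rank_le.
exact: (permuted_tuple_law iidW _ _ (measurable_rank_le _ _)).
Qed.

Local Open Scope ereal_scope.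

Lemma sum_probability_rank_event : (k < #|I|)%N ->
  (k.+1%:R)%:E <= \sum_(o : I) P (rank_event o).
Proof.
(* The sum is the expected number of samples of rank at most [k], and pointwise
   at least [k.+1] samples have rank at most [k]. *)
move=> kI; have mindic o : measurable_fun setT (EFin \o (\1_(rank_event o) : T -> R)).
  exact/measurable_EFinP/measurable_indic/measurable_rank_event.
have -> : \sum_(o : I) P (rank_event o) =
    \int[P]_(w in setT) (\sum_(o : I) (\1_(rank_event o) w)%:E).
  rewrite ge0_integral_sum //; apply: eq_bigr => o _.
  by rewrite integral_indic ?setIT //; exact: measurable_rank_event.
have -> : (k.+1%:R)%:E = \int[P]_(w in setT) (cst (k.+1%:R)%:E w).
  rewrite integral_cst //; set PT := (X in _ * X).
  by rewrite (_ : PT = 1) ?mule1 //; exact: probability_setT.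
apply: ge0_le_integral => //; first by move=> w _; rewrite lee_fin.
  exact: emeasurable_sum.
move=> w _; rewrite sumEFin lee_fin sum_indic_card ler_nat.
suff -> : [set o | w \in rank_event o]%SET = [set o | (rank_lt (W^~ w) (W o w) <= k)%N]%SET.
  exact: card_rank_lt_le_gt.
by apply/finset.setP => o; rewrite !finset.inE; apply/idP/idP; rewrite in_setE.
Qed.

Lemma rank_event_probability o : (k < #|I|)%N ->
  ((k.+1)%:R / #|I|%:R)%:E <= P (rank_event o).
Proof.
move=> kI; have := sum_probability_rank_event kI.
under eq_bigr => o' _ do rewrite (probability_rank_event o' o).
have /fineK <- : P (rank_event o) \is a fin_num.
  by apply: fin_num_measure; exact: measurable_rank_event.
rewrite sumEFin sumr_const !lee_fin => le_k.
by rewrite ler_pdivrMr ?mulr_natr // ltr0n (leq_ltn_trans (leq0n k) kI).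
Qed.

End ConformalRank.

Lemma ceil_ord_succ (R : realType) (N : nat) (x : R) : 0 < x -> x <= N%:R ->
  exists k : 'I_N, Num.ceil x = k.+1%:Z.
Proof.
move=> x_gt0 x_leN; have : (0 < Num.ceil x)%R by rewrite ceil_gt0.
have : (Num.ceil x <= N%:Z)%R by rewrite ceil_le_int.
case: (Num.ceil x) => [[|n]|//] //; rewrite lez_nat => nN _.
by exists (Ordinal nN).
Qed.

Lemma conformal_level_bounds (R : realType) (N : nat) (alpha : R) :
  N.+1%:R^-1 <= alpha -> alpha < 1 -> 0 < N.+1%:R * (1 - alpha) <= N%:R.
Proof.
move=> alpha_lo alpha_hi; have N1_gt0 : (0 : R) < N.+1%:R by rewrite ltr0n.
have : 1 <= N.+1%:R * alpha by rewrite -(ler_pM2l N1_gt0) mulfV ?gt_eqF // in alpha_lo.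
by rewrite mulr_gt0 ?subr_gt0 //= mulrBr mulr1 -natr1; lra.
Qed.

Lemma conformal_level_le (R : realType) (N k : nat) (alpha : R) :
  Num.ceil (N.+1%:R * (1 - alpha)) = k.+1%:Z -> 1 - alpha <= k.+1%:R / N.+1%:R.
Proof.
move=> ceil_k; rewrite ler_pdivlMr ?ltr0n // mulrC.
by have := ceil_ge (N.+1%:R * (1 - alpha)); rewrite ceil_k.
Qed.

Lemma mem_itv_sqrt_inv_Rplus (R : realType) (g : R -> R) (b c y : R) :
  pos_deriv_on_Rplus g -> (g @` [set x | 0 <= x]) b ->
  (y \in `[c - Num.sqrt (inv_Rplus g b), c + Num.sqrt (inv_Rplus g b)]) = (g ((c - y) ^+ 2) <= b).
Proof.
move=> g'_gt0 gb; have [inv_ge0 _] := inv_RplusP gb.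
rewrite in_itv /= -ler_distl -sqrtr_sqr ler_sqrt // -sqrrN opprB.
by rewrite le_inv_Rplus ?sqr_ge0.
Qed.

Lemma measurable_score {dX : measure_display} {R : realType} (X : measurableType dX)
    (f : X -> R) (phi : X -> R -> R) :
  measurable_fun setT f -> measurable_fun setT (fun p : X * R => phi p.1 p.2) ->
  measurable_fun setT (fun p : X * R => phi p.1 ((f p.1 - p.2) ^+ 2)).
Proof.
move=> mf mphi; have mpair : measurable_fun setT (fun p : X * R => (p.1, (f p.1 - p.2) ^+ 2)).
  apply: measurable_fun_pair => //.
  by apply/measurable_funX/measurable_funB => //; exact: measurableT_comp mf measurable_fst.
exact: (measurableT_comp mphi mpair).
Qed.

Theorem theorem1 (R : realType) (d N : nat) (hd : (0 < d)%N) (hN : (0 < N)%N)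
  (dT : measure_display) (T : measurableType dT) (P : probability T R)
  (X : 'I_N -> T -> d.-tuple R) (Y : 'I_N -> T -> R)
  (Xt : T -> d.-tuple R) (Yt : T -> R)
  (f : d.-tuple R -> R) (phi : d.-tuple R -> R -> R) :
  iid_family P (fun o : option 'I_N =>
    match o with Some n => fun w => (X n w, Y n w)
               | None => fun w => (Xt w, Yt w) end) ->
  measurable_fun setT f ->
  measurable_fun setT (fun p : d.-tuple R * R => phi p.1 p.2) ->
  (forall x, pos_deriv_on_Rplus (phi x)) ->
  (forall x x', phi x @` [set a : R | 0 <= a] = phi x' @` [set a : R | 0 <= a]) ->
  let A := fun (n : 'I_N) (w : T) => (f (X n w) - Y n w) ^+ 2 in
  let B := fun (n : 'I_N) (w : T) => phi (X n w) (A n w) in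
  (forall w (n n' : 'I_N), n != n' -> B n w != B n' w) ->
  (forall w, exists m : {perm 'I_N},
     forall i j : 'I_N, (i < j)%N -> B (m i) w < B (m j) w) /\
  (forall alpha : R, (N.+1%:R)^-1 <= alpha -> alpha < 1 ->
     (exists k : 'I_N, Num.ceil (N.+1%:R * (1 - alpha)) = (k.+1)%:Z) /\
     (forall k : 'I_N, Num.ceil (N.+1%:R * (1 - alpha)) = (k.+1)%:Z ->
      forall m : T -> {perm 'I_N},
        (forall w (i j : 'I_N), (i < j)%N -> B (m w i) w < B (m w j) w) ->
        let Delta := fun w : T =>
          Num.sqrt (inv_Rplus (phi (Xt w)) (B (m w k) w)) in
        (P [set w | Yt w \in `[(f (Xt w) - Delta w)%R, (f (Xt w) + Delta w)%R]]
          >= (1 - alpha)%:E)%E)).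
Proof.
set Z := fun o => _ => iidZ mf mphi phi'_gt0 phi_range A B B_inj; split.
  move=> w; apply: (@exists_sorting_perm _ _ _ (B^~ w)) => n n' /eqP.
  by apply: contraTeq; exact: B_inj.
move=> alpha alpha_lo alpha_hi.
have /andP[x_gt0 x_leN] := conformal_level_bounds alpha_lo alpha_hi.
split; first exact: ceil_ord_succ.
move=> k ceil_k m m_sorted; cbv zeta.
set Delta := fun w => Num.sqrt _.
pose W o := (fun p : d.-tuple R * R => phi p.1 ((f p.1 - p.2) ^+ 2)) \o Z o.
have iidW : iid_family P W := iid_family_comp (measurable_score mf mphi) iidZ.
have coverE w : (Yt w \in `[f (Xt w) - Delta w, f (Xt w) + Delta w]) =
    (rank_lt (W^~ w) (W None w) <= k)%N.
  have range_b : (phi (Xt w) @` [set a | 0 <= a]) (B (m w k) w).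
    by rewrite -(phi_range (X (m w k) w)); exists (A (m w k) w) => //; exact: sqr_ge0.
  rewrite mem_itv_sqrt_inv_Rplus //.
  rewrite (@le_sorted_rank_lt _ _ _ (B^~ w) (m w) k _ (m_sorted w)) -rank_lt_option.
  by congr (rank_lt _ _ <= k)%N; apply/funext => -[n|].
rewrite (_ : [set w | _] = rank_event W k None); last by apply/seteqP; split=> w; rewrite /= coverE.
have kI : (k < #|{: option 'I_N}|)%N by rewrite card_option card_ord; exact: leqW.
apply: le_trans (rank_event_probability iidW None kI).
by rewrite card_option card_ord lee_fin; exact: conformal_level_le.
Qed.
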